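(* For every $N$ with $4 \le N \le 10$, there is no multiset $\{d_1,\dots,d_N\}$ of decimal digits with $d_1 \neq 0$ such that, for every permutation $\sigma$ of $\{1,\dots,N\}$, the integer $\sum_{i=1}^{N} d_{\sigma(i)}\,10^{N-i}$ is prime.
   Context: Integers are written in base 10; the integer obtained from the digit sequence $(a_1,\dots,a_N)$ is $\sum_{i=1}^N a_i 10^{N-i}$. *)

From mathcomp Require Import all_boot all_fingroup.
Set Implicit Arguments. Unset Strict Implicit. Unset Printing Implicit Defensive.

Definition digits_value (N : nat) (a : 'I_N -> nat) : nat :=
  \sum_(i < N) a i * 10 ^ (N - 1 - i).

(* A digit 0, 2, 4, 5, 6 or 8 can be moved to the units place, which makes
   the number a multiple of 2 or 5; if all other digits vanish, the number is
   instead that digit followed by zeros.  Otherwise every digit is 1, 3, 7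
   or 9, and for each of the finitely many multisets of such digits of size
   4 to 10 a computation finds a rearrangement, one transposition away from
   the sorted one, with a prime factor below 240. *)

From Stdlib Require Import NArith.
From mathcomp Require Import all_boot all_fingroup zify.
Set Implicit Arguments. Unset Strict Implicit. Unset Printing Implicit Defensive.

Definition radix_value (b : nat) (l : seq nat) : nat :=
  foldl (fun n x => n * b + x) 0 l.

Lemma foldl_radix_value b a l :
  foldl (fun n x => n * b + x) a l = a * b ^ size l + radix_value b l.
Proof.
elim: l a => [|y l IHl] a /=; first by rewrite muln1 addn0.
by rewrite /radix_value /= !IHl mul0n add0n expnS mulnDl addnA mulnA.
Qed.

Lemma radix_value_cons b x l :
  radix_value b (x :: l) = x * b ^ size l + radix_value b l.
Proof. by rewrite /radix_value /= foldl_radix_value mul0n. Qed.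

Lemma radix_value_rcons b l x : radix_value b (rcons l x) = radix_value b l * b + x.
Proof. by rewrite /radix_value foldl_rcons. Qed.

Lemma radix_value_sum b l :
  radix_value b l = \sum_(i < size l) nth 0 l i * b ^ (size l - 1 - i).
Proof.
elim: l => [|x l IHl]; first by rewrite big_ord0.
rewrite radix_value_cons IHl [size (x :: l)]/= big_ord_recl subSS !subn0 subn1.
congr (_ + _); apply: eq_bigr => i _.
by rewrite lift0 /=; congr (_ * b ^ _); lia.
Qed.

Lemma digits_valueE N (a : 'I_N -> nat) :
  digits_value a = radix_value 10 [seq a i | i <- enum 'I_N].
Proof.
rewrite radix_value_sum size_map size_enum_ord; apply: eq_bigr => i _.
by rewrite (nth_map i) ?size_enum_ord // nth_ord_enum.
Qed.

Lemma digits_value_perm N (d : 'I_N -> nat) l :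
  perm_eq l [seq d i | i <- enum 'I_N] ->
  exists s : 'S_N, digits_value (fun i => d (s i)) = radix_value 10 l.
Proof.
rewrite -[X in perm_eq _ X]/(val [tuple d i | i < N]).
case/tuple_permP=> s ->; exists s; rewrite digits_valueE /=.
by congr radix_value; apply: eq_map => i; rewrite tnth_mktuple.
Qed.

Lemma dvdn_not_prime p n : 1 < p < n -> p %| n -> ~~ prime n.
Proof.
case/andP=> p_gt1 p_lt_n p_dvd_n; apply/negP => n_prime.
have p_neq1 : p != 1 by rewrite neq_ltn p_gt1 orbT.
by move: p_lt_n; rewrite (prime_nt_dvdP n_prime p_neq1 p_dvd_n) ltnn.
Qed.

(* A digit divisible by a proper divisor [p] of the base is put last; only
   when all the other digits vanish is it put first instead. *)
Lemma perm_not_prime_of_dvd_digit b p x l :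
  1 < p < b -> p %| b -> p %| x -> x \in l -> 1 < size l ->
  exists2 l', perm_eq l' l & ~~ prime (radix_value b l').
Proof.
move=> /andP [p_gt1 p_lt_b] p_dvd_b p_dvd_x x_l size_l.
have b_gt0 : 0 < b := ltn_trans (ltnW p_gt1) p_lt_b.
have size_rem : 0 < size (rem x l) by rewrite size_rem //; case: (size l) size_l.
have [rem0 | rem_neq0] := eqVneq (radix_value b (rem x l)) 0.
- exists (x :: rem x l); first by rewrite perm_sym perm_to_rem.
  rewrite radix_value_cons rem0 addn0.
  have [-> | x_neq0] := eqVneq x 0; first by rewrite mul0n.
  apply: (dvdn_not_prime (p := p)); last by rewrite dvdn_mull // dvdn_exp.
  rewrite p_gt1 (leq_trans p_lt_b) // -[leqLHS]mul1n leq_mul ?lt0n //.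
  by rewrite -[leqLHS]expn1 leq_pexp2l.
- exists (rcons (rem x l) x); first by rewrite perm_rcons perm_sym perm_to_rem.
  rewrite radix_value_rcons.
  apply: (dvdn_not_prime (p := p)); last by rewrite dvdn_add ?dvdn_mull.
  by rewrite p_gt1 (leq_trans p_lt_b) // (leq_trans _ (leq_addr _ _)) // leq_pmull ?lt0n.
Qed.

Fixpoint multisets (T : Type) (k : nat) (xs : seq T) : seq (seq T) :=
  if k is k'.+1 then
    (fix multisets_from ys :=
       if ys is y :: ys' then map (cons y) (multisets k' ys) ++ multisets_from ys'
       else [::]) xs
  else [:: [::]].

Lemma multisets_complete (T : eqType) k (xs l : seq T) :
  size l = k -> all (mem xs) l -> exists2 m, m \in multisets k xs & perm_eq m l.
Proof.
elim: k xs l => [|k IHk] xs l.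
  by move/eqP; rewrite size_eq0 => /eqP -> _; exists [::]; rewrite ?inE.
elim: xs l => [|y ys IHys] l size_l l_xs.
  by case: l size_l l_xs => // x l _ /=; rewrite andbF.
have [y_l | y_notin_l] := boolP (y \in l).
- have size_rem : size (rem y l) = k by rewrite size_rem // size_l.
  have rem_xs : all (mem (y :: ys)) (rem y l).
    by apply/allP => z /mem_rem; exact: (allP l_xs).
  have [m m_in m_perm] := IHk _ _ size_rem rem_xs.
  exists (y :: m); first by rewrite /= mem_cat map_f.
  by rewrite perm_sym (perm_trans (perm_to_rem y_l)) // perm_cons perm_sym.
- have l_ys : all (mem ys) l.
    apply/allP => z z_l; move: (allP l_xs z z_l); rewrite inE.
    by case/orP => // /eqP z_y; rewrite -z_y z_l in y_notin_l.
  have [m m_in m_perm] := IHys l size_l l_ys.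
  by exists m; rewrite //= mem_cat m_in orbT.
Qed.

Definition radix_valueN (b : N) (l : seq nat) : N :=
  foldl (fun n x => n * b + N.of_nat x)%num 0%num l.

Lemma radix_valueNE b l : N.to_nat (radix_valueN b l) = radix_value (N.to_nat b) l.
Proof.
rewrite /radix_valueN /radix_value -[0 in RHS]/(N.to_nat 0).
elim: l 0%num => [|x l IHl] n //=.
by rewrite IHl N2Nat.inj_add N2Nat.inj_mul Nat2N.id plusE multE.
Qed.

Definition small_primes : seq N :=
  Eval compute in [seq N.of_nat p | p <- iota 2 238 & prime p].

Lemma small_primes_bounds : all (fun p => 1 < N.to_nat p < 240) small_primes.
Proof. by []. Qed.

(* [find a s < size s] is [has a s] (see [has_find]), but is evaluated
   lazily by [vm_compute], which evaluates both arguments of [||]. *)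
Definition has_small_factor (l : seq nat) : bool :=
  let v := radix_valueN 10 l in
  find (fun p => N.eqb (v mod p) 0) small_primes < size small_primes.

Definition transpose_nth (i j : nat) (l : seq nat) : seq nat :=
  set_nth 0 (set_nth 0 l i (nth 0 l j)) j (nth 0 l i).

Definition transpositions (l : seq nat) : seq (seq nat) :=
  [seq transpose_nth i j l | i <- iota 0 (size l), j <- iota 0 (size l)].

(* Whether [c] rearranges [m] is checked here rather than proved. *)
Definition has_composite_transposition (m : seq nat) : bool :=
  let cs := transpositions m in
  find (fun c => perm_eq c m && has_small_factor c) cs < size cs.

Definition coprime_digits : seq nat := [:: 1; 3; 7; 9].

Lemma all_multisets_have_composite_transposition :
  all (fun k => all has_composite_transposition (multisets k coprime_digits))
      (iota 4 7).
Proof. by vm_compute. Qed.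

Lemma has_small_factor_not_prime x l :
  0 < x -> 3 <= size l -> has_small_factor (x :: l) ->
  ~~ prime (radix_value 10 (x :: l)).
Proof.
move=> x_gt0 size_l; rewrite /has_small_factor -has_find.
case/hasP=> p p_small /N.eqb_eq /N.Div0.mod_divides [c value_eq].
have /andP [p_gt1 p_lt] := allP small_primes_bounds p p_small.
have value_nat : radix_value 10 (x :: l) = N.to_nat p * N.to_nat c.
  by rewrite -[10]/(N.to_nat 10) -radix_valueNE value_eq N2Nat.inj_mul multE.
apply: (dvdn_not_prime (p := N.to_nat p)); last by rewrite value_nat dvdn_mulr.
rewrite p_gt1 (leq_trans p_lt) // radix_value_cons (leq_trans _ (leq_addr _ _)) //.
by rewrite -[leqLHS]mul1n leq_mul // (leq_trans _ (leq_pexp2l _ size_l)).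
Qed.

Lemma perm_not_prime_of_coprime_digits l :
  4 <= size l <= 10 -> all (mem coprime_digits) l ->
  exists2 l', perm_eq l' l & ~~ prime (radix_value 10 l').
Proof.
move=> size_l l_coprime.
have [m m_in m_perm] := multisets_complete (erefl (size l)) l_coprime.
have size_in : size l \in iota 4 7 by rewrite mem_iota; lia.
have := allP (allP all_multisets_have_composite_transposition _ size_in) m m_in.
rewrite /has_composite_transposition -has_find => /hasP [c _ /andP [c_m c_small]].
have c_l := perm_trans c_m m_perm.
exists c => //; case: c {c_m} c_small c_l => [|x c] c_small c_l.
  by move: size_l; rewrite -(perm_size c_l).
have : x \in coprime_digits.
  by apply: (allP l_coprime); rewrite -(perm_mem c_l) mem_head.
rewrite !inE => x_coprime.
apply: has_small_factor_not_prime => //; first by case/or4P: x_coprime => /eqP ->.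
by move: size_l; rewrite -(perm_size c_l) /=; lia.
Qed.

Theorem mainTheorem2 (N : nat) (hN4 : 4 <= N) (hN10 : N <= 10) :
  ~ exists d : 'I_N -> nat,
      (forall i, d i < 10) /\
      (exists h0 : 0 < N, d (Ordinal h0) != 0) /\
      (forall s : 'S_N, prime (digits_value (fun i => d (s i)))).
Proof.
case=> d [d_digit [_ d_prime]].
set l := [seq d i | i <- enum 'I_N].
suff [l' l'_perm l'_not_prime] : exists2 l', perm_eq l' l & ~~ prime (radix_value 10 l').
  have [s d_s] := digits_value_perm l'_perm.
  by move: (d_prime s); rewrite d_s (negPf l'_not_prime).
have [l_coprime | /allPn [_ /mapP [i _ ->] di_not_coprime]] :=
  boolP (all (mem coprime_digits) l).
  by apply: perm_not_prime_of_coprime_digits; rewrite // /l size_map size_enum_ord hN4.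
have di_l : d i \in l by exact: map_f (mem_enum _ _).
have size_gt1 : 1 < size l by rewrite /l size_map size_enum_ord (leq_trans _ hN4).
have : (2 %| d i) || (5 %| d i).
  by move: (d_digit i) di_not_coprime; case: (d i) => [|[|[|[|[|[|[|[|[|[|]]]]]]]]]].
by case/orP=> p_dvd; apply: (perm_not_prime_of_dvd_digit _ _ p_dvd di_l size_gt1).
Qed.
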